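(* Let $P$ be a query problem (with inputs of a fixed size $n$), let $D(P)$ be its deterministic query complexity and, for each integer $k\ge 0$, let $D_k(P)$ be its $k$-change query complexity, as defined in the context. Then: (i) $D_k(P)\le D(P)$ for every $k\ge 0$; (ii) for every $k\ge 0$, $$D_k(P)\le \min\Big\{\sum_{i=1}^{l} D_{j_i}(P)\;:\; l\ge 1,\ j_1,\dots,j_l\ge 0 \text{ integers},\ \sum_{i=1}^{l}(j_i+1)>k\Big\}.$$
   Context: A query problem $P$ consists of a finite set $X$ of inputs, a function $f:X\to Y$, and a set of allowed queries; each query $q$ has an answer $q(x)$ for each input $x\in X$. The goal is to determine $f(x)$ for an unknown input $x$. The deterministic query complexity $D(P)$ is the minimum, over all adaptive querying strategies (decision trees), of the maximum over inputs of the number of queries asked before the answers received determine $f$ (i.e. all inputs consistent with all answers so far have the same $f$-value). The $k$-change complexity $D_k(P)$ is defined by the following game between a Questioner and an Adversary. The Adversary chooses an input $x\in X$ (the current input). The Questioner, who always knows the current input, asks queries one after another; each query is answered according to the current input. Between queries the Adversary may replace the current input by any other input consistent with all answers given so far, but he may do so at most $k$ times in total. The game ends as soon as the answers given determine the value of $f$. $D_k(P)$ is the number of queries asked when the Questioner plays to minimize and the Adversary plays to maximize the number of queries. (In particular $D_0(P)$ is the non-deterministic/certificate complexity.) *)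

From mathcomp Require Import all_boot.
Set Implicit Arguments. Unset Strict Implicit. Unset Printing Implicit Defensive.

(* A query problem: finite input type X, function f : X -> Y, a type Q of
   allowed queries, and answers  ans q x : A  of query q on input x. *)
Section QueryProblem.
Variables (X : finType) (Y : eqType) (Q : Type) (A : eqType).
Variables (f : X -> Y) (ans : Q -> X -> A).

(* The answers received so far are summarised by the set S of inputs
   consistent with them; they determine f iff f is constant on S. *)
Definition determined (S : {set X}) : Prop :=
  forall y z, y \in S -> z \in S -> f y = f z.

Definition refine (S : {set X}) (q : Q) (x : X) : {set X} :=
  [set y in S | ans q y == ans q x].

Inductive dtree : Type :=
| Leaf : dtree
| Node : Q -> (A -> dtree) -> dtree.

Fixpoint solves (t : dtree) (m : nat) (S : {set X}) : Prop :=
  determined S \/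
  match t, m with
  | Node q br, m'.+1 =>
      forall x, x \in S -> solves (br (ans q x)) m' (refine S q x)
  | _, _ => False
  end.

Definition D_le (m : nat) : Prop := exists t : dtree, solves t m setT.

(* k-change game.  [qwins m S x c]: the Questioner can force the game to end
   within m further queries, when S is the set of inputs consistent with the
   answers so far, x the current input (just chosen/kept by the Adversary,
   known to the Questioner) and c the number of changes the Adversary has
   left.  After the answer to q the Adversary may keep x or replace it by a
   different consistent input (using one change). *)
Fixpoint qwins (m : nat) (S : {set X}) (x : X) (c : nat) : Prop :=
  determined S \/
  match m with
  | 0 => False
  | m'.+1 =>
      exists q : Q,
        forall x', x' \in refine S q x -> (x' = x \/ 0 < c) ->
          qwins m' (refine S q x) x' (if x' == x then c else c.-1)
  end.

Definition Dk_le (k m : nat) : Prop := forall x : X, qwins m setT x k.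

End QueryProblem.

From mathcomp Require Import all_boot.
Set Implicit Arguments. Unset Strict Implicit. Unset Printing Implicit Defensive.

(* (i) Against a decision tree the Adversary's changes are useless: the next
   query depends only on the answers so far, and any input the Adversary may
   switch to yields the same consistent set as the current one.
   (ii) The Questioner runs a strategy for D_{j_1} until the Adversary makes
   his (j_1+1)-th change, then restarts a strategy for D_{j_2} on the current
   consistent set, and so on; since sum_i (j_i + 1) > k, the last strategy
   started is never interrupted. *)

Section KChangeGame.
Variables (X : finType) (Y : eqType) (Q : Type) (A : eqType).
Variables (f : X -> Y) (ans : Q -> X -> A).

Lemma refineS (S S' : {set X}) q x :
  S' \subset S -> refine ans S' q x \subset refine ans S q x.
Proof.
move=> sS'S; apply/subsetP => y; rewrite !inE => /andP[yS' ->].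
by rewrite (subsetP sS'S).
Qed.

Lemma refine_consistent (S : {set X}) q x x' :
  x' \in refine ans S q x -> refine ans S q x' = refine ans S q x.
Proof.
by rewrite inE => /andP[_ /eqP ex'x]; apply/setP => y; rewrite !inE ex'x.
Qed.

Lemma determinedS (S S' : {set X}) :
  S' \subset S -> determined f S -> determined f S'.
Proof. by move=> sS'S detS y z yS' zS'; apply: detS; apply: (subsetP sS'S). Qed.

Lemma determined_qwins m (S : {set X}) x c :
  determined f S -> qwins f ans m S x c.
Proof. by case: m => *; left. Qed.

Lemma qwins_mono m m' (S S' : {set X}) x c c' :
  m <= m' -> c' <= c -> S' \subset S ->
  qwins f ans m S x c -> qwins f ans m' S' x c'.
Proof.
elim: m m' S S' x c c' => [|m IH] m' S S' x c c' le_mm' le_c'c sS'S /=.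
  by case=> // detS; apply/determined_qwins/(determinedS sS'S).
case=> [detS | [q win_q]]; first exact/determined_qwins/(determinedS sS'S).
case: m' le_mm' => [//|m'] le_mm' /=; right; exists q => x' x'S' legal.
have x'S : x' \in refine ans S q x by apply: (subsetP (refineS q x sS'S)).
have legal_c : x' = x \/ 0 < c.
  by case: legal => [-> | c'_gt0]; [left | right; apply: leq_trans le_c'c].
apply: IH (win_q x' x'S legal_c) => //; last exact: refineS.
by case: (x' == x) => //; rewrite -!subn1 leq_sub2r.
Qed.

Lemma solves_qwins t m S x c :
  solves f ans t m S -> qwins f ans m S x c.
Proof.
elim: t m S x c => [|q br IH] m S x c /=.
  by case=> // /determined_qwins.
case=> [/determined_qwins // | ].
case: m => [//|m] solves_br /=; right; exists q => x' x'S _.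
rewrite -(refine_consistent x'S); apply/IH/solves_br.
by move: x'S; rewrite inE => /andP[].
Qed.

Lemma qwins_cat m1 m2 (S : {set X}) x c1 c2 :
  qwins f ans m1 S x c1 -> Dk_le f ans c2 m2 ->
  qwins f ans (m1 + m2) S x (c1 + c2.+1).
Proof.
move=> + win2; elim: m1 S x c1 => [|m1 IH] S x c1 /=.
  by case=> // /determined_qwins.
case=> [detS | [q win_q]]; first by left.
right; exists q => x' x'S legal.
have [ex'x | ne_x'x] := eqVneq x' x.
  by subst x'; apply: IH; have := win_q x x'S (or_introl erefl); rewrite eqxx.
case: c1 win_q legal => [|c1] win_q legal /=.
  by apply: qwins_mono (win2 x'); rewrite ?leq_addl ?subsetT.
by have := win_q x' x'S (or_intror erefl); rewrite (negPf ne_x'x); apply: IH.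
Qed.

Lemma D_le_Dk_le k m : D_le f ans m -> Dk_le f ans k m.
Proof. by move=> [t solves_t] x; apply: solves_qwins solves_t. Qed.

Lemma Dk_leW k k' m : k' <= k -> Dk_le f ans k m -> Dk_le f ans k' m.
Proof. by move=> le_k'k win x; apply: qwins_mono (win x). Qed.

Lemma Dk_le_cat c1 c2 m1 m2 :
  Dk_le f ans c1 m1 -> Dk_le f ans c2 m2 -> Dk_le f ans (c1 + c2.+1) (m1 + m2).
Proof. by move=> win1 win2 x; apply: qwins_cat. Qed.

Lemma Dk_le_sum (p : nat * nat) (js : seq (nat * nat)) :
  (forall q, q \in p :: js -> Dk_le f ans q.1 q.2) ->
  Dk_le f ans (p.1 + \sum_(q <- js) q.1.+1) (p.2 + \sum_(q <- js) q.2).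
Proof.
elim: js p => [|p' js IH] p win.
  by rewrite !big_nil !addn0; apply: win; rewrite mem_head.
rewrite !big_cons addSn; apply: Dk_le_cat; first by apply: win; rewrite mem_head.
by apply: IH => q q_js; apply: win; rewrite in_cons q_js orbT.
Qed.

End KChangeGame.

Theorem proposition1 (X : finType) (Y : eqType) (Q : Type) (A : eqType)
    (f : X -> Y) (ans : Q -> X -> A) :
  (* (i)  D_k(P) <= D(P) *)
  (forall k m : nat, D_le f ans m -> Dk_le f ans k m) /\
  (* (ii) D_k(P) <= sum_i D_{j_i}(P) whenever l >= 1 and sum_i (j_i+1) > k;
     the list js stores pairs (j_i, m_i) with D_{j_i}(P) <= m_i *)
  (forall (k : nat) (js : seq (nat * nat)),
      js != [::] ->
      k < \sum_(p <- js) p.1.+1 ->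
      (forall p, p \in js -> Dk_le f ans p.1 p.2) ->
      Dk_le f ans k (\sum_(p <- js) p.2)).
Proof.
split; first by move=> k m; apply: D_le_Dk_le.
move=> k [//|p js] _; rewrite !big_cons addSn ltnS => le_k_sum win.
exact: Dk_leW le_k_sum (Dk_le_sum win).
Qed.
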